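(* In the dynamic weighted storage system described in the context, each read/write operation always finishes in the last installed view in the system ($lastview$).
   Context: System: servers $S=\{s_1,\dots,s_n\}$ and clients; reliable links; asynchronous; crash failures only; at most $f$ servers crash and $2f+1\le n$. Views form a sequence $v_0,v_1,\dots$ with $v_{k+1}=v_k.succ$; $v<w$ means $w$ is obtained from $v$ by applying $succ$ one or more times. Each server $s$ has a current view $s.cview$ (initially $v_0$) and a weight in each view; in every view each server's weight is strictly between $\mathbb{wl}=n/(2(n-f))$ and $\mathbb{wu}=n/(2f)$ and the total weight is at most $n$. A weighted majority for view $v$ is a set of servers whose weights in $v$ sum to more than $n/2$. View changer (server $s$ with $s.cview=v$): on timeout it sends $\langle\text{change\_view},v.succ\rangle$; once it has received or sent change\_view for $v.succ$ it forwards it if needed, disables read/write operations, sends $\langle\text{state\_update},(val,ts,cid),v,w\rangle$ to all servers (it has then uninstalled $v$), waits for state\_update messages for view $v$ with weights summing to more than $n/2$, adopts the value with largest $(ts,cid)$, sets $s.cview\leftarrow v.succ$ (installs $v.succ$) and re-enables read/write operations. A view $v$ is installed in the system once some server installs it and no server has a larger current view; $lastview$ is the last view installed in the system. Read/write protocol: each client keeps $cview$ (initially $v_0$). Each operation has two phases, both executed with the same client view (a view change restarts the whole operation); in each phase the client sends a request tagged with $cview$ to all servers; a server (when read/write operations are enabled) replies with its current view and, if it equals the request's view, its weight (else $\bot$), plus its register $(val,ts,cid)$ in phase 1, and in phase 2 stores the written value if views match and its $(ts,cid)$ is larger. The client collects replies with view equal to $cview$; on a reply with another view $v$ it sets $cview\leftarrow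 v$ if $cview<v$ and restarts the operation; a phase finishes when collected weights exceed $n/2$. *)

(* Operational model of the dynamic weighted storage system:
   servers 'I_n, clients indexed by nat, asynchronous message passing
   (network = multiset of in-flight messages, delivered in any order,
   each exactly once), crash failures (at most f), views = nat with
   v0 = 0 and succ = S. *)
From HB Require Import structures.
From mathcomp Require Import all_boot all_order all_algebra.
Set Implicit Arguments. Unset Strict Implicit. Unset Printing Implicit Defensive.
Import Order.TTheory GRing.Theory Num.Theory.
Local Open Scope ring_scope.

Definition view := nat.
Definition v0 : view := 0%N.
Definition vsucc (v : view) : view := v.+1.

Definition reg := (nat * nat * nat)%type.
Definition rval (r : reg) : nat := r.1.1.
Definition rts (r : reg) : nat := r.1.2.
Definition rcid (r : reg) : nat := r.2.
Definition reg_lt (a b : reg) : bool :=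
  (rts a < rts b)%N || ((rts a == rts b) && (rcid a < rcid b)%N).
Definition reg_max (a b : reg) : reg := if reg_lt a b then b else a.
Definition reg_init : reg := (0, 0, 0)%N.

Inductive op := OpRead | OpWrite of nat.
Inductive phase := Ph1 | Ph2.

Section Model.
Variables (R : realFieldType) (n f : nat) (W : view -> 'I_n -> R).

Definition client := nat.

Inductive msg :=
| MChangeView (dst : 'I_n) (w : view)
| MStateUpdate (dst src : 'I_n) (r : reg) (v w : view)
| MReq (dst : 'I_n) (c : client) (rid : nat) (ph : phase) (v : view) (wr : option reg)
| MRep (c : client) (src : 'I_n) (rid : nat) (sv : view) (wt : option R) (r : reg).

Record sstate := SState {
  s_view : view;
  s_enabled : bool;
  s_reg : reg;
  s_cv : seq view;          (* views w for which change_view was received or sent *)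
  s_su : seq (view * 'I_n * reg);  (* received state_update (view, sender, reg) *)
  s_crashed : bool }.

Inductive cstatus :=
| Idle
| Busy (o : op) (ph : phase) (wr : option reg) (coll : seq ('I_n * R * reg)).

Record cstate := CState {
  c_view : view;
  c_rid : nat;       (* tag of the current phase (incremented at each phase start) *)
  c_status : cstatus }.

Record gstate := GState {
  srv : 'I_n -> sstate;
  cli : client -> cstate;
  net : seq msg }.

Definition set_srv (g : gstate) (s : 'I_n) (x : sstate) : gstate :=
  GState (fun t => if t == s then x else srv g t) (cli g) (net g).
Definition set_cli (g : gstate) (c : client) (x : cstate) : gstate :=
  GState (srv g) (fun d => if d == c then x else cli g d) (net g).
Definition set_net (g : gstate) (m : seq msg) : gstate :=
  GState (srv g) (cli g) m.

Definition bcast (F : 'I_n -> msg) : seq msg := [seq F t | t <- enum 'I_n].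

Definition init_state : gstate :=
  GState (fun _ => SState v0 true reg_init [::] [::] false)
         (fun _ => CState v0 0 Idle) [::].

(* the last view installed in the system: the largest current view of a server
   (it is installed by the server holding it, or it is v0) *)
Definition lastview (g : gstate) : view := \max_(s < n) s_view (srv g s).

Definition su_senders (su : seq (view * 'I_n * reg)) (v : view) : {set 'I_n} :=
  [set t | has (fun e => (e.1.1 == v) && (e.1.2 == t)) su].

Definition coll_weight (coll : seq ('I_n * R * reg)) : R :=
  \sum_(e <- coll) e.1.2.

Definition half_n : R := n%:R / 2%:R.

Inductive label :=
| LTimeout (s : 'I_n)
| LRecvCV (s : 'I_n)
| LStartVC (s : 'I_n)
| LRecvSU (s : 'I_n)
| LInstall (s : 'I_n)
| LServe (s : 'I_n)
| LCrash (s : 'I_n)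
| LInvoke (c : client)
| LDrop (c : client)
| LRestart (c : client)
| LCollect (c : client)
| LPhaseDone (c : client) (ph : phase) (rid : nat) (v : view).

Inductive step : gstate -> label -> gstate -> Prop :=
| st_timeout g s x :
    x = srv g s -> ~~ s_crashed x ->
    step g (LTimeout s)
      (set_net (set_srv g s (SState (s_view x) (s_enabled x) (s_reg x)
                                    (vsucc (s_view x) :: s_cv x) (s_su x) false))
               (net g ++ bcast (fun t => MChangeView t (vsucc (s_view x)))))
| st_recv_cv g s x l1 l2 w :
    x = srv g s -> ~~ s_crashed x ->
    net g = l1 ++ MChangeView s w :: l2 ->
    step g (LRecvCV s)
      (set_net (set_srv g s (SState (s_view x) (s_enabled x) (s_reg x)
                                    (w :: s_cv x) (s_su x) false))
               (l1 ++ l2))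
| st_start_vc g s x :
    x = srv g s -> ~~ s_crashed x -> s_enabled x ->
    vsucc (s_view x) \in s_cv x ->
    step g (LStartVC s)
      (set_net (set_srv g s (SState (s_view x) false (s_reg x) (s_cv x) (s_su x) false))
               (net g ++ bcast (fun t => MChangeView t (vsucc (s_view x)))
                      ++ bcast (fun t => MStateUpdate t s (s_reg x) (s_view x)
                                                      (vsucc (s_view x)))))
| st_recv_su g s x l1 l2 src r v w :
    x = srv g s -> ~~ s_crashed x ->
    net g = l1 ++ MStateUpdate s src r v w :: l2 ->
    step g (LRecvSU s)
      (set_net (set_srv g s (SState (s_view x) (s_enabled x) (s_reg x)
                                    (s_cv x) ((v, src, r) :: s_su x) false))
               (l1 ++ l2))
| st_install g s x :
    x = srv g s -> ~~ s_crashed x -> ~~ s_enabled x ->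
    half_n < \sum_(t in su_senders (s_su x) (s_view x)) W (s_view x) t ->
    step g (LInstall s)
      (set_srv g s (SState (vsucc (s_view x)) true
                    (foldr reg_max (s_reg x)
                       [seq e.2 | e <- s_su x & e.1.1 == s_view x])
                    (s_cv x) (s_su x) false))
| st_serve g s x l1 l2 c rid ph v wr :
    x = srv g s -> ~~ s_crashed x -> s_enabled x ->
    net g = l1 ++ MReq s c rid ph v wr :: l2 ->
    let same := (v == s_view x) in
    let newreg :=
      match ph, wr with
      | Ph2, Some r => if same && reg_lt (s_reg x) r then r else s_reg x
      | _, _ => s_reg x
      end in
    step g (LServe s)
      (set_net (set_srv g s (SState (s_view x) true newreg (s_cv x) (s_su x) false))
               (l1 ++ l2 ++ [:: MRep c s rid (s_view x)
                                 (if same then Some (W (s_view x) s) else None)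
                                 (s_reg x)]))
| st_crash g s x :
    x = srv g s -> ~~ s_crashed x ->
    (#|[set t | s_crashed (srv g t)]| < f)%N ->
    step g (LCrash s)
      (set_srv g s (SState (s_view x) (s_enabled x) (s_reg x) (s_cv x) (s_su x) true))
| st_invoke g c y o :
    y = cli g c -> c_status y = Idle ->
    step g (LInvoke c)
      (set_net (set_cli g c (CState (c_view y) (c_rid y).+1 (Busy o Ph1 None [::])))
               (net g ++ bcast (fun t => MReq t c (c_rid y).+1 Ph1 (c_view y) None)))
| st_drop g c y l1 l2 t rid sv wt r :
    y = cli g c -> net g = l1 ++ MRep c t rid sv wt r :: l2 ->
    (c_status y = Idle \/ rid <> c_rid y) ->
    step g (LDrop c) (set_net g (l1 ++ l2))
| st_restart g c y l1 l2 t sv wt r o ph wr coll :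
    y = cli g c -> net g = l1 ++ MRep c t (c_rid y) sv wt r :: l2 ->
    c_status y = Busy o ph wr coll -> sv <> c_view y ->
    step g (LRestart c)
      (set_net (set_cli g c (CState (maxn (c_view y) sv) (c_rid y).+1
                                    (Busy o Ph1 None [::])))
               (l1 ++ l2 ++ bcast (fun u => MReq u c (c_rid y).+1 Ph1
                                                (maxn (c_view y) sv) None)))
| st_collect g c y l1 l2 t wt r o ph wr coll coll' :
    y = cli g c -> net g = l1 ++ MRep c t (c_rid y) (c_view y) wt r :: l2 ->
    c_status y = Busy o ph wr coll ->
    coll' = (if t \in [seq e.1.1 | e <- coll] then coll
             else (t, odflt 0 wt, r) :: coll) ->
    coll_weight coll' <= half_n ->
    step g (LCollect c)
      (set_net (set_cli g c (CState (c_view y) (c_rid y) (Busy o ph wr coll')))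
               (l1 ++ l2))
| st_done1 g c y l1 l2 t wt r o wr coll coll' :
    y = cli g c -> net g = l1 ++ MRep c t (c_rid y) (c_view y) wt r :: l2 ->
    c_status y = Busy o Ph1 wr coll ->
    coll' = (if t \in [seq e.1.1 | e <- coll] then coll
             else (t, odflt 0 wt, r) :: coll) ->
    half_n < coll_weight coll' ->
    let mx := foldr reg_max reg_init [seq e.2 | e <- coll'] in
    let wr' := match o with
               | OpRead => mx
               | OpWrite x => (x, (rts mx).+1, c.+1)
               end in
    step g (LPhaseDone c Ph1 (c_rid y) (c_view y))
      (set_net (set_cli g c (CState (c_view y) (c_rid y).+1 (Busy o Ph2 (Some wr') [::])))
               (l1 ++ l2 ++ bcast (fun u => MReq u c (c_rid y).+1 Ph2 (c_view y)
                                                (Some wr'))))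
| st_done2 g c y l1 l2 t wt r o wr coll coll' :
    y = cli g c -> net g = l1 ++ MRep c t (c_rid y) (c_view y) wt r :: l2 ->
    c_status y = Busy o Ph2 wr coll ->
    coll' = (if t \in [seq e.1.1 | e <- coll] then coll
             else (t, odflt 0 wt, r) :: coll) ->
    half_n < coll_weight coll' ->
    step g (LPhaseDone c Ph2 (c_rid y) (c_view y))
      (set_net (set_cli g c (CState (c_view y) (c_rid y) Idle)) (l1 ++ l2)).

Definition execution (ex : nat -> gstate) (lab : nat -> label) (k : nat) : Prop :=
  ex 0%N = init_state /\ forall i, (i < k)%N -> step (ex i) (lab i) (ex i.+1).

End Model.

(* A server moves from view v to v+1 only after receiving state_update messages
   for v from a weighted majority of servers, each of which had already disabled
   read/write operations in v; and such a server never again answers a request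
   tagged v.  Hence, as soon as lastview exceeds v, a weighted majority has
   uninstalled v for good.  Consider a client phase run in view v.  If lastview > v
   when it starts, the replies it can still collect come from the complement of
   that majority and weigh at most n/2, so the phase never finishes.  If
   lastview < v, no server is in view v yet, so no reply can be collected until
   lastview, which grows by at most one per step, has reached v.  Either way
   lastview = v at some moment of the phase. *)

From HB Require Import structures.
From mathcomp Require Import all_boot all_order all_algebra.
From mathcomp Require Import lra.
Import Order.TTheory GRing.Theory Num.Theory.
Set Implicit Arguments. Unset Strict Implicit. Unset Printing Implicit Defensive.
Local Open Scope ring_scope.

Lemma cat_app (T : Type) (s1 s2 : seq T) : s1 ++ s2 = List.app s1 s2.
Proof. by elim: s1 => //= x s ->. Qed.

Lemma In_cat_or {T : Type} {a : T} {s1 s2 : seq T} :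
  List.In a (s1 ++ s2) -> List.In a s1 \/ List.In a s2.
Proof. by rewrite cat_app; exact: List.in_app_or. Qed.

Lemma In_of_split {T : Type} {a : T} {s s1 s2 : seq T} : s = s1 ++ a :: s2 -> List.In a s.
Proof. by rewrite cat_app => ->; exact: List.in_elt. Qed.

Lemma In_cat_weaken {T : Type} {a b : T} {s1 s2 : seq T} :
  List.In a (s1 ++ s2) -> List.In a (s1 ++ b :: s2).
Proof. by rewrite !cat_app !List.in_app_iff /=; tauto. Qed.

Lemma map_list (T U : Type) (F : T -> U) (s : seq T) : map F s = List.map F s.
Proof. by elim: s => //= x s ->. Qed.

Lemma ler_sum_subset (R : numDomainType) (I : finType) (A B : {set I}) (F : I -> R) :
  (forall i, 0 <= F i) -> A \subset B -> \sum_(i in A) F i <= \sum_(i in B) F i.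
Proof.
move=> F_ge0 /subsetP AB; rewrite [leLHS]big_mkcond [leRHS]big_mkcond /=.
apply: ler_sum => i _; case: ifP => [/AB -> //|_]; by case: ifP.
Qed.

Section Invariants.
Variables (R : realFieldType) (n f : nat) (W : view -> 'I_n -> R).
Local Notation G := (gstate R n).
Local Notation stp := (@step R n f W).

Lemma srv_step_cases g l g' t : stp g l g' ->
  s_view (srv g' t) = s_view (srv g t) /\ (s_enabled (srv g' t) -> s_enabled (srv g t)) \/
  s_view (srv g' t) = (s_view (srv g t)).+1 /\
  half_n R n < \sum_(u in su_senders (s_su (srv g t)) (s_view (srv g t))) W (s_view (srv g t)) u.
Proof.
case=> * /=; rewrite /set_srv /=; try case: eqP => [->|_]; subst;
  first [by left | by right].
Qed.

Lemma s_view_step g l g' t : stp g l g' -> (s_view (srv g t) <= s_view (srv g' t))%N.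
Proof. by move=> st; case: (srv_step_cases t st) => [[-> _]|[-> _]]. Qed.

(* servers that have sent their state_update for [v] *)
Definition uninstalled (g : G) (v : view) : {set 'I_n} :=
  [set t | (v < s_view (srv g t))%N || (s_view (srv g t) == v) && ~~ s_enabled (srv g t)].

Lemma enabled_not_uninstalled g t :
  s_enabled (srv g t) -> t \notin uninstalled g (s_view (srv g t)).
Proof. by move=> en; rewrite inE ltnn eqxx en. Qed.

Lemma uninstalled_step g l g' v : stp g l g' -> uninstalled g v \subset uninstalled g' v.
Proof.
move=> st; apply/subsetP => t; rewrite !inE.
case: (srv_step_cases t st) => [[-> en]|[-> _]].
  by case/orP=> [->//|/andP[-> dis]]; rewrite (contra en dis) orbT.
by rewrite ltnS => /orP[/ltnW->|/andP[/eqP-> _]]; rewrite ?leqnn.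
Qed.

Lemma s_view_le_lastview (g : G) t : (s_view (srv g t) <= lastview g)%N.
Proof. exact: (@leq_bigmax _ (fun s => s_view (srv g s))). Qed.

Lemma lastview_step g l g' : stp g l g' -> (lastview g <= lastview g' <= (lastview g).+1)%N.
Proof.
move=> st; apply/andP; split; apply/bigmax_leqP => t _.
  exact: leq_trans (s_view_step t st) (s_view_le_lastview g' t).
case: (srv_step_cases t st) => [[-> _]|[-> _]]; last by rewrite ltnS s_view_le_lastview.
exact: leq_trans (s_view_le_lastview g t) (leqnSn _).
Qed.

Hypothesis W_ge0 : forall v t, 0 <= W v t.

Lemma In_bcast (m : msg R n) (F : 'I_n -> msg R n) : List.In m (bcast F) -> exists t, m = F t.
Proof. by rewrite /bcast map_list => /List.in_map_iff[t [<- _]]; exists t. Qed.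

(* what the sender guarantees about a message created by the step [g -> g'] *)
Definition fresh_msg (g g' : G) (m : msg R n) : Prop :=
  match m with
  | MChangeView _ _ => True
  | MStateUpdate _ src _ v _ => v = s_view (srv g' src) /\ ~~ s_enabled (srv g' src)
  | MReq _ c rid _ _ _ => rid = c_rid (cli g' c)
  | MRep c t rid sv wt _ =>
      [/\ sv = s_view (srv g t), s_enabled (srv g t), odflt 0 wt <= W sv t &
          exists ph v wr, List.In (MReq R t c rid ph v wr) (net g)]
  end.

Lemma net_origin g l g' m : stp g l g' -> List.In m (net g') ->
  List.In m (net g) \/ fresh_msg g g' m.
Proof.
case=> /=.
- by move=> {}g s x -> _ /In_cat_or[|/In_bcast[t ->]]; [left | right].
- by move=> {}g s x l1 l2 w _ _ -> ?; left; apply: In_cat_weaken.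
- move=> {}g s x -> _ _ _ /In_cat_or[|/In_cat_or[]/In_bcast[t ->]]; [by left|by right|].
  by right; rewrite /= /set_srv /= eqxx.
- by move=> {}g s x l1 l2 src r v w _ _ -> ?; left; apply: In_cat_weaken.
- by move=> *; left.
- move=> {}g s x l1 l2 c rid ph v wr -> _ en net_g.
  rewrite catA => /In_cat_or[/In_cat_weaken|[<-|//]]; first by rewrite net_g; left.
  right; split=> //; first by case: eqP; rewrite ?W_ge0.
  by exists ph, v, wr; apply: In_of_split net_g.
- by move=> *; left.
- move=> {}g c y o -> _ /In_cat_or[|/In_bcast[t ->]]; first by left.
  by right; rewrite /= /set_cli /= eqxx.
- by move=> {}g c y l1 l2 t rid sv wt r _ -> _ ?; left; apply: In_cat_weaken.
- move=> {}g c y l1 l2 t sv wt r o ph wr coll -> net_g _ _.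
  rewrite catA => /In_cat_or[/In_cat_weaken|/In_bcast[u ->]]; first by rewrite net_g; left.
  by right; rewrite /= /set_cli /= eqxx.
- by move=> {}g c y l1 l2 t wt r o ph wr coll coll' _ -> *; left; apply: In_cat_weaken.
- move=> {}g c y l1 l2 t wt r o wr coll coll' -> net_g _ _ _.
  rewrite catA => /In_cat_or[/In_cat_weaken|/In_bcast[u ->]]; first by rewrite net_g; left.
  by right; rewrite /= /set_cli /= eqxx.
- by move=> {}g c y l1 l2 t wt r o wr coll coll' _ -> *; left; apply: In_cat_weaken.
Qed.

Lemma su_step_cases g l g' s : stp g l g' ->
  s_su (srv g' s) = s_su (srv g s) \/
  exists src r v w, List.In (MStateUpdate R s src r v w) (net g) /\
                    s_su (srv g' s) = (v, src, r) :: s_su (srv g s).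
Proof.
case=> * /=; rewrite /set_srv /=; try case: eqP => [->|_]; subst; try by left.
by right; do 4 eexists; split; [apply: In_of_split; eassumption|].
Qed.

Definition collect_reply (t : 'I_n) (wt : option R) (r : reg) (coll : seq ('I_n * R * reg)) :=
  if t \in [seq e.1.1 | e <- coll] then coll else (t, odflt 0 wt, r) :: coll.

Lemma client_step_cases g l g' d : stp g l g' ->
  let y := cli g d in
  [\/ cli g' d = y,
      c_rid (cli g' d) = (c_rid y).+1 /\ exists o ph wr, c_status (cli g' d) = Busy o ph wr [::],
      c_rid (cli g' d) = c_rid y /\ c_status (cli g' d) = Idle R n |
      exists o ph wr coll t wt r,
        [/\ c_status y = Busy o ph wr coll,
            cli g' d = CState (c_view y) (c_rid y) (Busy o ph wr (collect_reply t wt r coll)) &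
            List.In (MRep d t (c_rid y) (c_view y) wt r) (net g)]].
Proof.
move=> st y; rewrite {}/y; case: st => * /=; rewrite /set_cli /=;
  try case: eqP => [->|_]; subst; try by constructor 1.
- by constructor 2; split; last do 3 eexists.
- by constructor 2; split; last do 3 eexists.
- constructor 4; do 7 eexists; split; [eassumption|reflexivity|].
  by apply: In_of_split; eassumption.
- by constructor 2; split; last do 3 eexists.
- by constructor 3.
Qed.

Lemma c_rid_step g l g' d : stp g l g' -> (c_rid (cli g d) <= c_rid (cli g' d))%N.
Proof.
by case/(client_step_cases d) => [->|[->]|[->]|[? [? [? [? [? [? [? [_ -> _]]]]]]]]].
Qed.

Record net_inv (g : G) : Prop := NetInv {
  quorum_uninstalled : forall v, (v < lastview g)%N ->
    half_n R n < \sum_(t in uninstalled g v) W v t;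
  su_entry_uninstalled : forall s e, e \in s_su (srv g s) -> e.1.2 \in uninstalled g e.1.1;
  su_msg_uninstalled : forall dst src r v w,
    List.In (MStateUpdate R dst src r v w) (net g) -> src \in uninstalled g v;
  rep_msg_ok : forall c t rid sv wt r, List.In (MRep c t rid sv wt r) (net g) ->
    [/\ (sv <= s_view (srv g t))%N, odflt 0 wt <= W sv t & (rid <= c_rid (cli g c))%N];
  req_msg_rid : forall dst c rid ph v wr,
    List.In (MReq R dst c rid ph v wr) (net g) -> (rid <= c_rid (cli g c))%N }.

Lemma net_inv_init : net_inv (init_state R n).
Proof. by split=> // v; rewrite /lastview big1_eq. Qed.

Lemma quorum_uninstalled_step g l g' v : net_inv g -> stp g l g' ->
  (v < lastview g')%N -> half_n R n < \sum_(t in uninstalled g' v) W v t.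
Proof.
move=> inv st lt_v; have [lt_v0|le_v0] := ltnP v (lastview g).
  apply: lt_le_trans (quorum_uninstalled inv lt_v0) _.
  exact: ler_sum_subset (W_ge0 v) (uninstalled_step v st).
(* then [v = lastview g], and some server installs [v.+1] in this very step *)
have [t lt_v_t] : exists t, (v < s_view (srv g' t))%N.
  apply/existsP; apply: contraLR lt_v => /existsPn all_le; rewrite -leqNgt.
  by apply/bigmax_leqP => t _; rewrite leqNgt all_le.
have le_t_v := leq_trans (s_view_le_lastview g t) le_v0.
case: (srv_step_cases t st) => [[eq_t _]|[eq_t quorum_t]].
  by rewrite eq_t ltnNge le_t_v in lt_v_t.
have -> : v = s_view (srv g t) by apply/eqP; rewrite eqn_leq -ltnS -eq_t lt_v_t.
apply: lt_le_trans quorum_t (ler_sum_subset (W_ge0 _) _); apply/subsetP => u.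
rewrite inE => /hasP[e /(su_entry_uninstalled inv) e_su /andP[/eqP <- /eqP <-]].
exact: subsetP (uninstalled_step _ st) _ e_su.
Qed.

Lemma net_inv_step g l g' : net_inv g -> stp g l g' -> net_inv g'.
Proof.
move=> inv st; have [_ su_entry su_msg rep_msg req_msg] := inv.
have up v : {subset uninstalled g v <= uninstalled g' v} := subsetP (uninstalled_step v st).
split.
- by move=> v; apply: quorum_uninstalled_step inv st.
- move=> s e; case: (su_step_cases s st) => [->|[src [r [v [w [in_net ->]]]]]].
    by move/su_entry/up.
  by rewrite in_cons => /orP[/eqP-> /=|/su_entry/up //]; apply/up/(su_msg _ _ _ _ _ in_net).
- move=> dst src r v w /(net_origin st)[/su_msg/up // | [-> dis]].
  by rewrite inE ltnn eqxx dis.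
- move=> c t rid sv wt r /(net_origin st)[/rep_msg[le_sv wt_le le_rid]|].
    split=> //; first exact: leq_trans le_sv (s_view_step t st).
    exact: leq_trans le_rid (c_rid_step c st).
  move=> [-> _ wt_le [ph [v [wr /req_msg le_rid]]]]; split=> //; first exact: s_view_step st.
  exact: leq_trans le_rid (c_rid_step c st).
- move=> dst c rid ph v wr /(net_origin st)[/req_msg le_rid|-> //].
  exact: leq_trans le_rid (c_rid_step c st).
Qed.

Hypothesis W_sum_le : forall v, \sum_(t < n) W v t <= n%:R.

Definition coll_ok v (coll : seq ('I_n * R * reg)) : bool :=
  uniq [seq e.1.1 | e <- coll] && all (fun e => e.1.2 <= W v e.1.1) coll.

Lemma coll_ok_collect v coll t wt r :
  coll_ok v coll -> odflt 0 wt <= W v t -> coll_ok v (collect_reply t wt r coll).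
Proof.
rewrite /coll_ok /collect_reply => /andP[uq ok] wt_le.
by case: ifP => t_new //=; rewrite ?t_new uq ok ?wt_le.
Qed.

Lemma coll_weight_disjoint v coll (X : {set 'I_n}) :
  coll_ok v coll -> {in coll, forall e, e.1.1 \notin X} ->
  coll_weight coll + \sum_(t in X) W v t <= n%:R.
Proof.
case/andP=> uq /allP le_W disj.
have coll_le : coll_weight coll <= \sum_(t in [seq e.1.1 | e <- coll]) W v t.
  by rewrite -big_uniq // big_map /coll_weight !big_seq; apply: ler_sum => e /le_W.
apply: le_trans (lerD coll_le (lexx _)) (le_trans _ (W_sum_le v)).
rewrite [X in X + _]big_mkcond [X in _ + X]big_mkcond -big_split /=.
apply: ler_sum => t _; case: ifP => t_coll; case: ifP => t_X; rewrite ?addr0 ?add0r //.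
by case/mapP: t_coll => e /disj + t_e; rewrite -t_e t_X.
Qed.

(* phase [rid] of client [d] in view [v] can then never gather a weighted majority *)
Definition blocked (g : G) d v rid (coll : seq ('I_n * R * reg)) : Prop :=
  exists2 X : {set 'I_n}, half_n R n < \sum_(t in X) W v t &
    [/\ X \subset uninstalled g v, {in coll, forall e, e.1.1 \notin X} &
        forall t wt r, List.In (MRep d t rid v wt r) (net g) -> t \notin X].

Lemma blocked_step g l g' d v rid coll :
  stp g l g' -> blocked g d v rid coll -> blocked g' d v rid coll.
Proof.
move=> st [X quorum [sub disj no_rep]]; exists X => //; split=> //.
  exact: subset_trans sub (uninstalled_step v st).
move=> t wt r /(net_origin st)[/no_rep // | [eq_v en _ _]].
by apply: contra (enabled_not_uninstalled en); rewrite -eq_v; apply: (subsetP sub).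
Qed.

Lemma blocked_collect g d v rid coll t wt r :
  blocked g d v rid coll -> List.In (MRep d t rid v wt r) (net g) ->
  blocked g d v rid (collect_reply t wt r coll).
Proof.
move=> [X quorum [sub disj no_rep]] t_rep; exists X => //; split=> //.
rewrite /collect_reply; case: ifP => // _ e.
by rewrite in_cons => /predU1P[-> | /disj //]; apply: no_rep t_rep.
Qed.

Lemma blocked_coll_weight g d v rid coll :
  coll_ok v coll -> blocked g d v rid coll -> coll_weight coll <= half_n R n.
Proof.
move=> ok [X quorum [_ disj _]]; have := coll_weight_disjoint ok disj.
by move: quorum; rewrite /half_n; lra.
Qed.

(* [seen rid v]: in some earlier state the client was in phase [rid] while [lastview = v] *)
Definition client_inv (seen : nat -> view -> Prop) (g : G) d : Prop :=
  if c_status (cli g d) is Busy _ _ _ coll then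
    let v := c_view (cli g d) in let rid := c_rid (cli g d) in
    coll_ok v coll /\ [\/ seen rid v, (lastview g < v)%N | blocked g d v rid coll]
  else True.

Lemma reply_view_le_lastview g d t rid sv wt r :
  net_inv g -> List.In (MRep d t rid sv wt r) (net g) -> (sv <= lastview g)%N.
Proof. by move=> inv /(rep_msg_ok inv)[le_sv _ _]; apply: leq_trans le_sv (s_view_le_lastview g t). Qed.

Lemma client_inv_phase_start seen g d o ph wr :
  net_inv g -> c_status (cli g d) = Busy o ph wr [::] ->
  (forall t sv wt r, ~ List.In (MRep d t (c_rid (cli g d)) sv wt r) (net g)) ->
  seen (c_rid (cli g d)) (lastview g) -> client_inv seen g d.
Proof.
move=> inv busy no_rep seen_now; rewrite /client_inv busy; split=> //.
case: (ltngtP (lastview g) (c_view (cli g d))) => [lt | gt | <-]; last by constructor 1.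
  by constructor 2.
constructor 3; exists (uninstalled g (c_view (cli g d))); first exact: quorum_uninstalled gt.
by split=> // t wt r /no_rep.
Qed.

Lemma no_reply_new_rid g l g' d :
  net_inv g -> stp g l g' -> c_rid (cli g' d) = (c_rid (cli g d)).+1 ->
  forall t sv wt r, ~ List.In (MRep d t (c_rid (cli g' d)) sv wt r) (net g').
Proof.
move=> inv st -> t sv wt r /(net_origin st)[/(rep_msg_ok inv)[_ _] | [_ _ _ [ph [v [wr]]]]].
  by rewrite ltnn.
by move/(req_msg_rid inv); rewrite ltnn.
Qed.

Lemma client_inv_step seen seen' g l g' d :
  net_inv g -> stp g l g' -> (forall rid v, seen rid v -> seen' rid v) ->
  seen' (c_rid (cli g' d)) (lastview g') -> client_inv seen g d -> client_inv seen' g' d.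
Proof.
move=> inv st mono seen_now; case: (client_step_cases d st).
- rewrite /client_inv => same; rewrite same in seen_now *.
  case: (c_status _) => // o ph wr coll [ok inv_d]; split=> //.
  case: inv_d => [/mono | lt | /(blocked_step st)]; [by constructor 1 | | by constructor 3].
  have /andP[_ le_lv] := lastview_step st.
  case: (ltngtP (lastview g') (c_view (cli g d))) => [lt' | gt' | eq']; last 1 first.
  + by constructor 1; rewrite -eq'.
  + by constructor 2.
  + by move: (leq_trans gt' le_lv); rewrite ltnS leqNgt lt.
- move=> [new_rid [o [ph [wr busy]]]] _.
  exact: client_inv_phase_start (net_inv_step inv st) busy (no_reply_new_rid inv st new_rid) seen_now.
- by move=> [_ idle] _; rewrite /client_inv idle.
- move=> [o [ph [wr [coll [t [wt [r [busy eq' t_rep]]]]]]]].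
  rewrite /client_inv eq' busy /= => -[ok inv_d].
  have [_ wt_le _] := rep_msg_ok inv t_rep.
  split; first exact: coll_ok_collect.
  case: inv_d => [/mono | lt | blk]; first by constructor 1.
    by move: (reply_view_le_lastview inv t_rep); rewrite leqNgt lt.
  by constructor 3; apply: blocked_step st (blocked_collect blk t_rep).
Qed.

Lemma phase_done_inv g c ph rid v g' : stp g (LPhaseDone n c ph rid v) g' ->
  exists o ph' wr coll t wt r,
   [/\ c_status (cli g c) = Busy o ph' wr coll, rid = c_rid (cli g c), v = c_view (cli g c),
       List.In (MRep c t rid v wt r) (net g) & half_n R n < coll_weight (collect_reply t wt r coll)].
Proof.
move=> st; inversion st; subst; do 7 eexists; split; try eassumption; try done.
all: by apply: In_of_split; eassumption.
Qed.

Lemma phase_done_seen seen g c ph rid v g' :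
  net_inv g -> client_inv seen g c -> stp g (LPhaseDone n c ph rid v) g' -> seen rid v.
Proof.
move=> inv + /phase_done_inv[o [ph' [wr [coll [t [wt [r [busy -> -> t_rep heavy]]]]]]]].
rewrite /client_inv busy => -[ok [// | lt | blk]].
  by move: (reply_view_le_lastview inv t_rep); rewrite leqNgt lt.
have [_ wt_le _] := rep_msg_ok inv t_rep.
have := blocked_coll_weight (coll_ok_collect r ok wt_le) (blocked_collect blk t_rep).
by rewrite leNgt heavy.
Qed.
End Invariants.

Definition seen_upto (R : realFieldType) n (ex : nat -> gstate R n) i d rid v : Prop :=
  exists m, (m <= i)%N /\ c_rid (cli (ex m) d) = rid /\ lastview (ex m) = v.

Lemma execution_inv (R : realFieldType) n f (W : view -> 'I_n -> R) ex lab k :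
  (forall v t, 0 <= W v t) -> execution f W ex lab k -> forall i, (i <= k)%N ->
  net_inv W (ex i) /\ forall d, client_inv W (seen_upto ex i d) (ex i) d.
Proof.
move=> W_ge0 [ex0 steps]; elim=> [_ | i IH lt_ik].
  by rewrite ex0; split=> [|d]; [exact: net_inv_init | rewrite /client_inv].
have [inv cinv] := IH (ltnW lt_ik); have st := steps i lt_ik.
split=> [|d]; first exact: (net_inv_step W_ge0 inv st).
apply: (client_inv_step W_ge0 inv st _ _ (cinv d)); last by exists i.+1.
by move=> rid v [m [le_mi seen_m]]; exists m; split=> //; apply: leqW.
Qed.

Theorem lemma8 (R : realFieldType) (n f : nat) (W : view -> 'I_n -> R)
  (hfn : (2 * f + 1 <= n)%N)
  (hWlo : forall v s, n%:R < W v s * (2 * (n - f))%:R)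
  (hWhi : forall v s, W v s * (2 * f)%:R < n%:R)
  (hWsum : forall v, \sum_(s < n) W v s <= n%:R)
  (ex : nat -> gstate R n) (lab : nat -> label n) (k : nat) :
  execution f W ex lab k ->
  forall (j : nat) (c : client) (ph : phase) (rid : nat) (v : view),
    (j < k)%N -> lab j = LPhaseDone n c ph rid v ->
    exists m : nat, (m <= j)%N /\ c_rid (cli (ex m) c) = rid /\ lastview (ex m) = v.
Proof.
move=> exe j c ph rid v lt_jk lab_j.
(* of the weight bounds, only nonnegativity and the bound on the total weight matter *)
have W_ge0 w s : 0 <= W w s.
  by have := hWlo w s; have := ler0n R (2 * (n - f)); have := ler0n R n; nra.
have [inv cinv] := execution_inv W_ge0 exe (ltnW lt_jk).
have st := exe.2 j lt_jk; rewrite lab_j in st.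
exact: (phase_done_seen W_ge0 hWsum inv (cinv c) st).
Qed.
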